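(* Let $V$ be a vector space over a field $F$ and $T\in OP(V)$ have a vanishing polynomial, with minimal polynomial $p_m(x)=\sum_{i=0}^m a_ix^i$. If $T$ is surjective, then $a_0\neq0$ and $T$ is bijective.
   Context: $OP(V)$ is the set of all (not necessarily linear) maps $V\to V$; $T^0=I$, $T^{i}=T\circ T^{i-1}$, and for $p(x)=\sum a_ix^i$, $p(T)(v)=\sum a_iT^i(v)$. A vanishing polynomial of $T$ is a nonzero $p\in F[x]$ with $p(T)(v)=0$ for all $v$. The minimal polynomial of $T$ is the unique monic vanishing polynomial of $T$ of least degree. *)

From mathcomp Require Import all_boot all_order all_algebra.
Set Implicit Arguments. Unset Strict Implicit. Unset Printing Implicit Defensive.
Import GRing.Theory.
Local Open Scope ring_scope.

(* p(T)(v) = sum_i a_i T^i(v), with T^0 = id, T^i = T o T^(i-1); T an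
   arbitrary (not necessarily linear) map V -> V. *)
Definition op_eval (F : fieldType) (V : lmodType F) (p : {poly F}) (T : V -> V)
  (v : V) : V := \sum_(i < size p) p`_i *: iter i T v.

Definition vanishing_poly (F : fieldType) (V : lmodType F) (T : V -> V)
  (p : {poly F}) : Prop := p != 0 /\ forall v, op_eval p T v = 0.

Definition is_min_poly (F : fieldType) (V : lmodType F) (T : V -> V)
  (p : {poly F}) : Prop :=
  [/\ p \is monic, vanishing_poly T p &
      forall q, q \is monic -> vanishing_poly T q -> (size p <= size q)%N].

From mathcomp Require Import all_boot all_order all_algebra.
Set Implicit Arguments. Unset Strict Implicit. Unset Printing Implicit Defensive.
Import GRing.Theory.
Local Open Scope ring_scope.

(* Peel the constant term off the minimal polynomial: p(T) v = a_0 v + q(T)(T v)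
   with q = p / X.  If a_0 = 0 and T is surjective, q is a monic vanishing
   polynomial of smaller degree, contradicting minimality.  If a_0 != 0, then
   v = - a_0^-1 q(T)(T v), so w |-> - a_0^-1 q(T) w is a left inverse of T, and
   a left inverse of a surjection is a two-sided inverse. *)

Section OpEval.

Variables (F : fieldType) (V : lmodType F) (T : V -> V).

Lemma op_eval_widen (p : {poly F}) (n : nat) (v : V) : (size p <= n)%N ->
  op_eval p T v = \sum_(i < n) p`_i *: iter i T v.
Proof.
move=> le_p_n; rewrite /op_eval (big_ord_widen n (fun i => p`_i *: iter i T v) le_p_n).
rewrite big_mkcond /=; apply: eq_bigr => i _.
by case: ltnP => // /(nth_default 0) ->; rewrite scale0r.
Qed.

Lemma op_eval_drop1 (p : {poly F}) (v : V) :
  op_eval p T v = p`_0 *: v + op_eval (drop_poly 1 p) T (T v).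
Proof.
rewrite (@op_eval_widen p (size p).+1) // big_ord_recl /=.
rewrite (@op_eval_widen _ (size p)) ?size_drop_poly ?leq_subr //.
by congr (_ + _); apply: eq_bigr => i _; rewrite coef_drop_poly addn1 -iterSr.
Qed.

Lemma vanishing_drop1 (p : {poly F}) : (forall w, exists v, T v = w) ->
  p`_0 = 0 -> (forall v, op_eval p T v = 0) ->
  forall w, op_eval (drop_poly 1 p) T w = 0.
Proof.
move=> surjT p0 pT0 w; have [v <-] := surjT w.
by rewrite -(pT0 v) [RHS]op_eval_drop1 p0 scale0r add0r.
Qed.

Lemma op_eval_drop1_cancel (p : {poly F}) : p`_0 != 0 ->
  (forall v, op_eval p T v = 0) ->
  cancel T (fun w => - (p`_0)^-1 *: op_eval (drop_poly 1 p) T w).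
Proof.
move=> p0 pT0 v; have /eqP := pT0 v; rewrite op_eval_drop1 addrC addr_eq0 => /eqP ->.
by rewrite scalerN scaleNr opprK scalerA mulVf // scale1r.
Qed.

End OpEval.

Lemma monic_drop1 (F : fieldType) (p : {poly F}) :
  p \is monic -> p`_0 = 0 -> drop_poly 1 p \is monic /\ size (drop_poly 1 p) = (size p).-1.
Proof.
move=> mon_p p0; rewrite size_drop_poly subn1; split=> //.
have := monic_neq0 mon_p; rewrite -size_poly_eq0.
case sz_p: (size p) mon_p => [|[|n]] // mon_p _.
  by move: mon_p; rewrite monicE lead_coefE sz_p p0 eq_sym oner_eq0.
by move: mon_p; rewrite !monicE !lead_coefE size_drop_poly sz_p coef_drop_poly addn1.
Qed.

Lemma min_poly_coef0_neq0 (F : fieldType) (V : lmodType F) (T : V -> V)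
    (p : {poly F}) :
  is_min_poly T p -> (forall w, exists v, T v = w) -> p`_0 != 0.
Proof.
move=> [mon_p [_ pT0] min_p] surjT; apply/eqP => p0.
have [mon_q sz_q] := monic_drop1 mon_p p0.
have := min_p _ mon_q (conj (monic_neq0 mon_q) (vanishing_drop1 surjT p0 pT0)).
rewrite sz_q; have := monic_neq0 mon_p; rewrite -size_poly_eq0.
by case: (size p) => // n _; rewrite ltnn.
Qed.

Theorem mainTheorem14 (F : fieldType) (V : lmodType F) (T : V -> V)
  (p : {poly F}) :
  (exists q, vanishing_poly T q) ->
  is_min_poly T p ->
  (forall w : V, exists v, T v = w) ->
  p`_0 != 0 /\ bijective T.
Proof.
move=> _ min_p surjT; have p0 := min_poly_coef0_neq0 min_p surjT.
have [_ [_ pT0] _] := min_p.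
have TK := op_eval_drop1_cancel p0 pT0.
split=> //; exists (fun w => - (p`_0)^-1 *: op_eval (drop_poly 1 p) T w) => // w.
by have [v <-] := surjT w; rewrite TK.
Qed.
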